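(* Let $N=\{1,\dots,n\}$. Every set function $s:2^N\to\mathbb{R}$ is a generalized coverage function: there exist a finite set $U$ with $|U|\le 2^{|N|}$, subsets $S_1,\dots,S_n\subseteq U$, a weight function $w:U\to\mathbb{R}$ and a constant $c\in\mathbb{R}$ such that for all $A\subseteq N$, $$s_A = c+\mathbf{w}\Big(\bigcup_{i\in A}S_i\Big),$$ where $\mathbf{w}(S)=\sum_{u\in S}w(u)$ for $S\subseteq U$.
   Context: A generalized coverage function on $N$ is a set function of the form $A\mapsto c+\mathbf{w}(\bigcup_{i\in A}S_i)$ for some collection of subsets $S_1,\dots,S_n$ of a global set $U$, a constant $c\in\mathbb{R}$, and a real weight function $w$ on $U$ (weights may be negative or zero) extended additively to subsets by $\mathbf{w}(S)=\sum_{u\in S}w(u)$. *)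

From mathcomp Require Import all_boot all_order all_algebra.
Set Implicit Arguments. Unset Strict Implicit. Unset Printing Implicit Defensive.
Import Order.TTheory GRing.Theory Num.Theory.
Local Open Scope ring_scope.

Definition wsum (R : numDomainType) (U : finType) (w : U -> R) (S : {set U}) : R :=
  \sum_(u in S) w u.

Definition gen_coverage (R : numDomainType) (n : nat) (U : finType)
  (S : 'I_n -> {set U}) (w : U -> R) (c : R) (A : {set 'I_n}) : R :=
  c + wsum w (\bigcup_(i in A) S i).

From mathcomp Require Import all_boot all_order all_algebra.
Import Order.TTheory GRing.Theory Num.Theory.
Local Open Scope ring_scope.

(* Take U = 2^N and S_i = {T | i \in T}: a set T misses \bigcup_(i in A) S_i
   exactly when T \subset N \ A.  By Moebius inversion on the subset lattice
   there is a weight w with w(2^X) = - s(N \ X) for every X, hence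
   w(\bigcup_(i in A) S_i) = w(2^N) - w(2^(N \ A)) = s A - s(\emptyset),
   and c = s(\emptyset) works. *)

Section MoebiusInversion.
Context {R : comPzRingType} {I : finType}.

Lemma prod_if_sign (J : {set I}) :
  \prod_i (if i \in J then -1 else 1) = (-1) ^+ #|J| :> R.
Proof. by rewrite -big_mkcond prodr_const. Qed.

Lemma sum_sign_interval (B X : {set I}) : B \subset X ->
  \sum_(T : {set I} | (T \subset X) && (B \subset T)) (-1) ^+ #|T|
    = (B == X)%:R * (-1) ^+ #|X| :> R.
Proof.
move=> BX.
pose F i : R := if i \in X then -1 else 0.
pose G i : R := if i \in B then 0 else 1.
(* Expanding \prod_i (F i + G i) over subsets J leaves exactly the signs on [B, X]. *)
have term (J : {set I}) : \prod_i (if i \in J then F i else G i)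
    = if (J \subset X) && (B \subset J) then (-1) ^+ #|J| else 0.
  case: ifP => [/andP[JX BJ] | /negbT].
    rewrite -prod_if_sign; apply: eq_bigr => i _; rewrite /F /G.
    case: ifP => iJ; first by rewrite (subsetP JX).
    by case: ifP => // iB; rewrite (subsetP BJ _ iB) in iJ.
  rewrite negb_and => /orP[/subsetPn[i iJ iX] | /subsetPn[i iB iJ]].
    by rewrite (bigD1 i) //= iJ /F (negbTE iX) mul0r.
  by rewrite (bigD1 i) //= (negbTE iJ) /G iB mul0r.
rewrite big_mkcond /= -(eq_bigr _ (fun J _ => term J)).
transitivity (\prod_i (F i + G i)); first by rewrite bigA_distr.
case: (eqVneq B X) => [eBX | neBX].
  rewrite mul1r -prod_if_sign; apply: eq_bigr => i _; rewrite /F /G -eBX.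
  by case: (i \in B); rewrite ?addr0 ?add0r.
have /subsetPn[i iX iB] : ~~ (X \subset B)
  by apply: contra neBX => XB; rewrite eqEsubset BX.
by rewrite mul0r (bigD1 i) //= /F /G iX (negbTE iB) addNr mul0r.
Qed.

Definition moebius (g : {set I} -> R) (T : {set I}) : R :=
  (-1) ^+ #|T| * \sum_(B : {set I} | B \subset T) (-1) ^+ #|B| * g B.

Lemma sum_moebius (g : {set I} -> R) (X : {set I}) :
  \sum_(T : {set I} | T \subset X) moebius g T = g X.
Proof.
rewrite /moebius; under eq_bigr => T _ do rewrite big_distrr /=.
rewrite (exchange_big_dep (fun B : {set I} => B \subset X)) /=; last first.
  by move=> T B TX BT; apply: subset_trans BT TX.
under eq_bigr => B BX do rewrite -big_distrl /= sum_sign_interval //.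
rewrite (bigD1 X) //= eqxx big1 ?addr0 => [|B /andP[_ /negbTE ->]].
  by rewrite mul1r mulrA -exprD addnn -signr_odd odd_double expr0 mul1r.
by rewrite !mul0r.
Qed.

End MoebiusInversion.

Lemma mem_bigcup_contains {I : finType} (A T : {set I}) :
  (T \in \bigcup_(i in A) [set T' : {set I} | i \in T']) = ~~ [disjoint T & A].
Proof.
apply/bigcupP/pred0Pn => [[i iA] | [i /andP[iT iA]]].
  by rewrite inE => iT; exists i; apply/andP.
by exists i; rewrite ?inE.
Qed.

Lemma wsum_bigcup_contains {R : numDomainType} {I : finType}
    {g w : {set I} -> R} :
  (forall X : {set I}, \sum_(T : {set I} | T \subset X) w T = g X) ->
  forall A : {set I},
    wsum w (\bigcup_(i in A) [set T : {set I} | i \in T]) = g setT - g (~: A).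
Proof.
move=> sum_w A; rewrite /wsum; set V := \bigcup_(i in A) _.
have <- : \sum_T w T = g setT by rewrite -sum_w; apply: eq_bigl => T; rewrite subsetT.
have <- : \sum_(T | T \notin V) w T = g (~: A).
  by rewrite -sum_w; apply: eq_bigl => T; rewrite mem_bigcup_contains negbK disjoints_subset.
by rewrite [\sum_T w T](bigID (mem V)) /= addrK.
Qed.

Theorem theorem1 (R : realFieldType) (n : nat) (s : {set 'I_n} -> R) :
  exists (U : finType) (S : 'I_n -> {set U}) (w : U -> R) (c : R),
    (#|U| <= 2 ^ n)%N /\ forall A : {set 'I_n}, s A = gen_coverage S w c A.
Proof.
pose g (X : {set 'I_n}) := - s (~: X).
exists {set 'I_n}, (fun i => [set T : {set 'I_n} | i \in T]), (moebius g), (s set0).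
split.
  by rewrite -cardsT -powersetT card_powerset cardsT card_ord.
move=> A; rewrite /gen_coverage (wsum_bigcup_contains (sum_moebius g)).
by rewrite /g setCT setCK opprK addNKr.
Qed.
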